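(* Fix an arbitrary execution of Algorithm $\mathrm{tree}(G)$ on $G$, and let $r$, $U$ and $F$ be as defined in the context. If $uv$ is an edge of $G$ with $u\in U$ and $d_F(v)=1$, then $r(u)>r(v)$.
   Context: $G$ is a finite connected simple undirected graph containing a vertex $a$ with $d_G(a)\ge 2$. For a subtree $T$ of $G$ and a vertex $u$ of $T$: - $V_T(u)$ is the set of vertices $v\in V(G)\setminus V(T)$ with $uv\in E(G)$. - $E_T(u)$ is the set of edges $uv$ of $G$ with $v\in V_T(u)$. - If $|V_T(u)|=1$, then $v_T(u)$ denotes the unique vertex of $V_T(u)$. Three sets of vertices of $T$ are defined: - $W_2(T)=\{u\in V(T): |V_T(u)|\ge 2\}$. - $W_1(T)=\{u\in V(T): |V_T(u)|=1,\ |V_{T\cup E_T(u)}(v_T(u))|\ge 2\}$. - $W_0(T)=\{u\in V(T): |V_T(u)|=1,\ |V_{T\cup E_T(u)}(v_T(u))|\le 1\}$. Algorithm $\mathrm{tree}(G)$ runs as follows. 1. Start with $T=\{a\}$. 2. While $V(T)\ne V(G)$: - If $W_2(T)\ne\emptyset$, pick an arbitrary $u\in W_2(T)$. - Else, if $W_1(T)\neq\emptyset$, pick an arbitrary $u\in W_1(T)$. - Else, let $u$ be the vertex of $W_0(T)$ that joined $V(T)$ most recently. - Set $T:=T\cup E_T(u)$ (''expand $T$ at $u$''). 3. Return $T$. Now fix an execution and let $T$ be the returned spanning tree, rooted at $a$. For $v\ne a$, let $p(v)$ be the parent of $v$ in $T$. For each vertex $u$ with $d_T(u)\ge 2$, let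 $T_u$ be the tree just before the (unique) expansion at $u$. The rank $r:V(G)\to\mathbb{Z}$ is defined by $r(a)=1$ and, for each edge $uv$ of $T$ with $u=p(v)$: - $r(v)=r(u)$ if $u\in W_2(T_u)$; - $r(v)=1+\max_{w\in V(T_u)} r(w)$ otherwise. $U$ is the set of vertices $v$ such that no other vertex has rank $r(v)$. $F$ is the spanning forest obtained from $T$ by deleting every edge $uv$ with $r(u)\ne r(v)$, and $d_F(v)$ denotes the degree of $v$ in $F$. *)

From mathcomp Require Import all_boot.
Set Implicit Arguments. Unset Strict Implicit. Unset Printing Implicit Defensive.

(* A subtree T grown by Algorithm tree(G) is determined by its vertex set V
   (edges are recorded through the sequence of expansions). *)
Section TreeAlg.
Variables (T : finType) (e : rel T).

Definition Vout (V : {set T}) (u : T) : {set T} := [set v | e u v & v \notin V].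

Definition expand (V : {set T}) (u : T) : {set T} := V :|: Vout V u.

Definition W2 (V : {set T}) : {set T} := [set u in V | 1 < #|Vout V u|].
Definition W1 (V : {set T}) : {set T} :=
  [set u in V | (#|Vout V u| == 1)
                && [exists v in Vout V u, 1 < #|Vout (expand V u) v|]].
Definition W0 (V : {set T}) : {set T} :=
  [set u in V | (#|Vout V u| == 1)
                && [forall v in Vout V u, #|Vout (expand V u) v| <= 1]].

Definition rank_step (V : {set T}) (r : T -> nat) (u : T) : T -> nat :=
  fun v => if v \in Vout V u then
             (if u \in W2 V then r u else (\max_(w in V) r w).+1)
           else r v.

Definition step (st : {set T} * (T -> nat)) (u : T) : {set T} * (T -> nat) :=
  (expand st.1 u, rank_step st.1 st.2 u).

(* state after performing the expansions listed in s, starting from T = {a},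
   r(a) = 1 (values of r outside the current tree are irrelevant dummies) *)
Definition run (a : T) (s : seq T) := foldl step ([set a], fun _ => 1) s.

Definition tree_verts (a : T) (s : seq T) (i : nat) : {set T} :=
  (run a (take i s)).1.

Definition rank (a : T) (s : seq T) : T -> nat := (run a s).2.

(* the i-th expansion (at u = nth a s i) obeys the rules of tree(G).
   "u joined V(T) most recently among W0" : every w ∈ W0 was already in the
   tree at every earlier stage j ≤ i at which u was. *)
Definition valid_choice (a : T) (s : seq T) (i : nat) : Prop :=
  let V := tree_verts a s i in
  let u := nth a s i in
  V != setT /\
  (if W2 V != set0 then is_true (u \in W2 V)
   else if W1 V != set0 then is_true (u \in W1 V)
   else u \in W0 V /\
        (forall w, w \in W0 V -> forall j, j <= i ->
            u \in tree_verts a s j -> w \in tree_verts a s j)).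

Definition execution (a : T) (s : seq T) : Prop :=
  (forall i, i < size s -> valid_choice a s i) /\
  tree_verts a s (size s) = setT.

Definition tree_edge (a : T) (s : seq T) (x y : T) : bool :=
  [exists i : 'I_(size s),
     ((x == nth a s i) && (y \in Vout (tree_verts a s i) (nth a s i)))
  || ((y == nth a s i) && (x \in Vout (tree_verts a s i) (nth a s i)))].

Definition unique_rank (a : T) (s : seq T) (u : T) : Prop :=
  forall w, w != u -> rank a s w != rank a s u.

Definition degF (a : T) (s : seq T) (v : T) : nat :=
  #|[set w | tree_edge a s v w && (rank a s w == rank a s v)]|.

End TreeAlg.

From mathcomp Require Import all_boot.
Set Implicit Arguments. Unset Strict Implicit. Unset Printing Implicit Defensive.

(* Suppose r(u) < r(v).  Because u is the only vertex of its rank, no vertex of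
   rank r(u) is ever expanded in W2 (it would have two children of that rank).
   Hence u is not the root (the first expansion is at a, in W2), and u joined
   the tree alone, in an expansion at some p in W1 or W0 made while W2 was
   empty; so r(u) exceeds all earlier ranks and v was still outside the tree.
   The next expansion is then at u: if p is in W1, u is the only vertex of W2;
   if p is in W0, u is the only possible vertex of W1 and otherwise the most
   recent vertex of W0.  Since u is not in W2, its child v gets a rank above all
   earlier ones, so v's parent has smaller rank, and v's children either have
   larger rank or, if v is expanded in W2, at least two of them have rank r(v).
   Either way d_F(v) <> 1. *)

Section Frontier.
Variables (T : finType) (e : rel T).
Implicit Types (V : {set T}) (x y : T).

Lemma in_Vout V x y : (y \in Vout e V x) = e x y && (y \notin V).
Proof. by rewrite inE. Qed.

Lemma in_W2 V x : (x \in W2 e V) = (x \in V) && (1 < #|Vout e V x|).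
Proof. by rewrite inE. Qed.

Lemma in_W1 V x :
  (x \in W1 e V) = [&& x \in V, #|Vout e V x| == 1
                    & [exists y in Vout e V x, 1 < #|Vout e (expand e V x) y|]].
Proof. by rewrite inE. Qed.

Lemma in_W0 V x :
  (x \in W0 e V) = [&& x \in V, #|Vout e V x| == 1
                    & [forall y in Vout e V x, #|Vout e (expand e V x) y| <= 1]].
Proof. by rewrite inE. Qed.

Lemma Vout_antimono V V' x : V \subset V' -> Vout e V' x \subset Vout e V x.
Proof.
move=> sVV'; apply/subsetP => y; rewrite !in_Vout => /andP[-> yV'].
by apply: contra yV'; apply: (subsetP sVV').
Qed.

Lemma W2_expand_sub V x : W2 e V = set0 -> W2 e (expand e V x) \subset Vout e V x.
Proof.
move=> W2V; apply/subsetP => y; rewrite in_W2 in_setU => /andP[/orP[yV|//] gt1].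
have : y \in W2 e V.
  by rewrite in_W2 yV (leq_trans gt1) // subset_leq_card // Vout_antimono // subsetUl.
by rewrite W2V inE.
Qed.

Lemma Vout_expand_W2free V x y : W2 e V = set0 -> y \in V ->
  #|Vout e (expand e V x) y| = 1 -> Vout e (expand e V x) y = Vout e V y.
Proof.
move=> W2V yV card1; apply/eqP; rewrite eqEcard Vout_antimono ?subsetUl // card1.
rewrite leqNgt; apply/negP => gt1.
have : y \in W2 e V by rewrite in_W2 yV gt1.
by rewrite W2V inE.
Qed.

Lemma W1_expand_sub V x : W2 e V = set0 -> W1 e V = set0 ->
  W1 e (expand e V x) \subset Vout e V x.
Proof.
move=> W2V W1V; apply/subsetP => y.
rewrite in_W1 in_setU => /and3P[/orP[yV|//] /eqP card1 /exists_inP[z zout gt1]].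
have VoutE := Vout_expand_W2free W2V yV card1.
have : y \in W1 e V.
  rewrite in_W1 yV -VoutE card1 eqxx; apply/exists_inP; exists z; rewrite -?VoutE //.
  apply: leq_trans gt1 _; apply/subset_leq_card/Vout_antimono.
  by rewrite /expand VoutE setUSS ?subsetUl.
by rewrite W1V inE.
Qed.

Lemma W1_child_W2 V x y : x \in W1 e V -> Vout e V x = [set y] ->
  y \in W2 e (expand e V x).
Proof.
rewrite in_W1 => /and3P[_ _ /exists_inP[z + gt1]] VoutE.
by rewrite VoutE inE => /eqP zy; rewrite in_W2 -zy gt1 in_setU VoutE zy set11 orbT.
Qed.

Lemma W0_child_card V x y : x \in W0 e V -> Vout e V x = [set y] ->
  #|Vout e (expand e V x) y| <= 1.
Proof.
by rewrite in_W0 => /and3P[_ _ /forall_inP le1] VoutE; rewrite le1 ?VoutE ?set11.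
Qed.

Lemma W0_of_notW1 V x : x \in V -> #|Vout e V x| = 1 -> x \notin W1 e V ->
  x \in W0 e V.
Proof.
move=> xV card1; rewrite in_W1 in_W0 xV card1 eqxx /= negb_exists_in.
by move/forall_inP => le1; apply/forall_inP => y /le1; rewrite -leqNgt.
Qed.

End Frontier.

Section Run.
Variables (T : finType) (e : rel T) (a : T) (s : seq T).
Local Notation V := (tree_verts e a s).
Local Notation r := (rank e a s).

Lemma run_takeS i : i < size s ->
  run e a (take i.+1 s) = step e (run e a (take i s)) (nth a s i).
Proof. by move=> lt_is; rewrite /run (take_nth a lt_is) foldl_rcons. Qed.

Lemma tree_verts0 : V 0 = [set a].
Proof. by rewrite /tree_verts take0. Qed.

Lemma tree_vertsS i : i < size s -> V i.+1 = expand e (V i) (nth a s i).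
Proof. by move=> lt_is; rewrite /tree_verts run_takeS. Qed.

Lemma tree_verts_oversize i : size s <= i -> V i = V (size s).
Proof. by move=> le_si; rewrite /tree_verts take_oversize ?take_size. Qed.

Lemma tree_verts_mono : {homo V : i j / i <= j >-> i \subset j}.
Proof.
apply: homo_leq => [//|j i k|i]; first exact: subset_trans.
have [lt_is|le_si] := ltnP i (size s); first by rewrite tree_vertsS ?subsetUl.
by rewrite !tree_verts_oversize // ltnW.
Qed.

Lemma tree_verts_lt_size i x : V (size s) = setT -> x \notin V i -> i < size s.
Proof.
move=> Vfull; apply: contraR; rewrite -leqNgt => /tree_verts_oversize->.
by rewrite Vfull inE.
Qed.

Lemma exists_join_step x : V (size s) = setT -> x != a ->
  exists2 j, j < size s & x \in Vout e (V j) (nth a s j).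
Proof.
move=> Vfull xa; have x_end : exists i, x \in V i by exists (size s); rewrite Vfull inE.
have [[|j] xVj1 min_j] := ex_minnP x_end.
  by rewrite tree_verts0 inE (negbTE xa) in xVj1.
have xVj : x \notin V j by apply: contraTN isT => /min_j; rewrite ltnn.
have lt_js := tree_verts_lt_size Vfull xVj.
by exists j; move: xVj1; rewrite // tree_vertsS // in_setU (negbTE xVj).
Qed.

Lemma rank_run i x : x \in V i -> r x = (run e a (take i s)).2 x.
Proof.
move=> xV; suff stable k : (run e a (take (i + k) s)).2 x = (run e a (take i s)).2 x.
  by rewrite -(stable (size s)) take_oversize ?leq_addl.
elim: k => [|k IHk]; first by rewrite addn0.
have [lt_s|le_s] := ltnP (i + k) (size s); last first.
  by rewrite -IHk !take_oversize // ?addnS (leq_trans le_s).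
have xVk : x \in V (i + k) by apply: subsetP xV; apply/tree_verts_mono/leq_addr.
by rewrite addnS run_takeS //= /rank_step in_Vout xVk andbF.
Qed.

Lemma rank_child i w : i < size s -> nth a s i \in V i ->
  w \in Vout e (V i) (nth a s i) ->
  r w = if nth a s i \in W2 e (V i) then r (nth a s i)
        else (\max_(x in V i) r x).+1.
Proof.
move=> lt_is xV wout.
have wV : w \in V i.+1 by rewrite tree_vertsS // in_setU wout orbT.
rewrite (rank_run wV) run_takeS //= /rank_step -/(V i) wout (rank_run xV).
by congr (if _ then _ else _.+1); apply: eq_bigr => y yV; rewrite (rank_run yV).
Qed.

Lemma joined_once i k w : i < size s -> k < size s ->
  w \in Vout e (V i) (nth a s i) -> w \in Vout e (V k) (nth a s k) -> i = k.
Proof.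
have joined j : j < size s -> w \in Vout e (V j) (nth a s j) ->
    (w \in V j.+1) && (w \notin V j).
  move=> lt_js wout; rewrite tree_vertsS // in_setU wout orbT /=.
  by move: wout; rewrite in_Vout => /andP[].
move=> lt_is lt_ks /(joined _ lt_is)/andP[wVi wVi'] /(joined _ lt_ks)/andP[wVk wVk'].
have [lt_ik|lt_ki|//] := ltngtP i k.
  by case/negP: wVk'; apply: subsetP wVi; apply: tree_verts_mono.
by case/negP: wVi'; apply: subsetP wVk; apply: tree_verts_mono.
Qed.

End Run.

Section Execution.
Variables (T : finType) (e : rel T) (a : T) (s : seq T).
Hypothesis valid : forall i, i < size s -> valid_choice e a s i.
Local Notation V := (tree_verts e a s).
Local Notation r := (rank e a s).

Lemma expanded_in_tree i : i < size s -> nth a s i \in V i.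
Proof.
move=> /valid[_]; case: ifP => _; first by rewrite in_W2 => /andP[].
by case: ifP => _; [rewrite in_W1 => /andP[]|rewrite in_W0 => -[/andP[]]].
Qed.

Lemma expanded_W2 i : i < size s -> W2 e (V i) != set0 -> nth a s i \in W2 e (V i).
Proof. by move=> /valid[_] + W2i; rewrite W2i. Qed.

Lemma expanded_W1 i : i < size s -> W2 e (V i) = set0 -> W1 e (V i) != set0 ->
  nth a s i \in W1 e (V i).
Proof. by move=> /valid[_] + W2i W1i; rewrite W2i eqxx W1i. Qed.

Lemma expanded_W0 i : i < size s -> W2 e (V i) = set0 -> W1 e (V i) = set0 ->
  nth a s i \in W0 e (V i) /\
  forall w, w \in W0 e (V i) -> forall j, j <= i -> nth a s i \in V j -> w \in V j.
Proof. by move=> /valid[_] + W2i W1i; rewrite W2i W1i !eqxx. Qed.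

Lemma card_Vout_expanded i : i < size s -> W2 e (V i) = set0 ->
  #|Vout e (V i) (nth a s i)| = 1.
Proof.
move=> lt_is W2i; have [W1i|/(expanded_W1 lt_is W2i)] := eqVneq (W1 e (V i)) set0.
  by case: (expanded_W0 lt_is W2i W1i); rewrite in_W0 => /and3P[_ /eqP].
by rewrite in_W1 => /and3P[_ /eqP].
Qed.

Lemma W2_expansion_not_unique_rank i u : i < size s ->
  nth a s i \in W2 e (V i) -> unique_rank e a s u -> r (nth a s i) != r u.
Proof.
move=> lt_is iW2 uniq_u; apply/eqP => r_iu.
have [x [y [xout yout xy]]] : exists x y, [/\ x \in Vout e (V i) (nth a s i),
    y \in Vout e (V i) (nth a s i) & x != y].
  by apply/card_gt1P; rewrite in_W2 in iW2; case/andP: iW2.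
have r_child w : w \in Vout e (V i) (nth a s i) -> r w = r u.
  by move=> wout; rewrite (rank_child lt_is (expanded_in_tree lt_is) wout) iW2.
have [w wout wu] : exists2 w, w \in Vout e (V i) (nth a s i) & w != u.
  by have [xu|] := eqVneq x u; [exists y; rewrite // -xu eq_sym|exists x].
by move: (uniq_u w wu); rewrite r_child ?eqxx.
Qed.

Lemma rank_new_child_gt i w y : i < size s -> nth a s i \notin W2 e (V i) ->
  w \in Vout e (V i) (nth a s i) -> y \in V i -> r y < r w.
Proof.
move=> lt_is iW2 wout yV.
rewrite (rank_child lt_is (expanded_in_tree lt_is) wout) (negbTE iW2) ltnS.
exact: leq_bigmax_cond.
Qed.

Lemma degF_new_child k v : k < size s -> nth a s k \notin W2 e (V k) ->
  v \in Vout e (V k) (nth a s k) -> degF e a s v != 1.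
Proof.
move=> lt_ks kW2 vout; apply/eqP => /eqP/cards1P[w Fv].
have : w \in [set w | tree_edge e a s v w && (r w == r v)] by rewrite Fv set11.
rewrite inE => /andP[/existsP[[i lt_is] /= edge] /eqP r_wv].
case/orP: edge => [/andP[/eqP v_i wout]|/andP[/eqP w_i vout_i]].
- have vV : v \in V i by rewrite v_i expanded_in_tree.
  have [iW2|iW2] := boolP (nth a s i \in W2 e (V i)); last first.
    by move: (rank_new_child_gt lt_is iW2 wout vV); rewrite r_wv ltnn.
  have : Vout e (V i) v \subset [set w].
    rewrite -Fv; apply/subsetP => x xout; rewrite inE; apply/andP; split.
      by apply/existsP; exists (Ordinal lt_is); rewrite /= -v_i eqxx xout.
    by rewrite (rank_child lt_is (expanded_in_tree lt_is)) ?iW2 -v_i.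
  move/subset_leq_card; rewrite cards1 leqNgt v_i.
  by rewrite in_W2 in iW2; case/andP: iW2 => _ ->.
- rewrite (joined_once lt_is lt_ks vout_i vout) in w_i.
  have wV : w \in V k by rewrite w_i expanded_in_tree.
  by move: (rank_new_child_gt lt_ks kW2 vout wV); rewrite r_wv ltnn.
Qed.

Lemma unique_rank_joined_alone j u : j < size s ->
  u \in Vout e (V j) (nth a s j) -> unique_rank e a s u ->
  W2 e (V j) = set0 /\ Vout e (V j) (nth a s j) = [set u].
Proof.
move=> lt_js out_u uniq_u.
have [W2j|/(expanded_W2 lt_js) jW2] := eqVneq (W2 e (V j)) set0; last first.
  move: (W2_expansion_not_unique_rank lt_js jW2 uniq_u).
  by rewrite (rank_child lt_js (expanded_in_tree lt_js) out_u) jW2 eqxx.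
have /eqP/cards1P[x out_x] := card_Vout_expanded lt_js W2j.
by split=> //; move: out_u; rewrite out_x inE => /eqP->.
Qed.

Lemma expansion_after_join j u : j.+1 < size s -> W2 e (V j) = set0 ->
  Vout e (V j) (nth a s j) = [set u] -> Vout e (V j.+1) u != set0 ->
  nth a s j.+1 = u.
Proof.
move=> lt_j1s W2j out_j u_out; have lt_js := ltnW lt_j1s.
have Vj1 : V j.+1 = expand e (V j) (nth a s j) by rewrite tree_vertsS.
have [W2j1|/(expanded_W2 lt_j1s)] := eqVneq (W2 e (V j.+1)) set0; last first.
  by rewrite Vj1 => /(subsetP (W2_expand_sub _ W2j)); rewrite out_j inE => /eqP.
have W1j : W1 e (V j) = set0.
  apply/eqP; apply: contraTT isT => /(expanded_W1 lt_js W2j) /W1_child_W2.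
  by move/(_ _ out_j); rewrite -Vj1 W2j1 inE.
have [W1j1|/(expanded_W1 lt_j1s W2j1)] := eqVneq (W1 e (V j.+1)) set0; last first.
  by rewrite Vj1 => /(subsetP (W1_expand_sub _ W2j W1j)); rewrite out_j inE => /eqP.
have [jW0 _] := expanded_W0 lt_js W2j W1j.
have [_ recent] := expanded_W0 lt_j1s W2j1 W1j1.
have uVj : u \notin V j by move: (set11 u); rewrite -out_j in_Vout => /andP[].
have uVj1 : u \in V j.+1 by rewrite Vj1 in_setU out_j set11 orbT.
have card_u : #|Vout e (V j.+1) u| = 1.
  by apply/eqP; rewrite eqn_leq card_gt0 u_out andbT Vj1 (W0_child_card jW0 out_j).
have uW0 : u \in W0 e (V j.+1) by rewrite W0_of_notW1 // W1j1 inE.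
have xVj : nth a s j.+1 \notin V j.
  by apply: contra uVj; apply: recent => //; apply: leqnSn.
move: (expanded_in_tree lt_j1s); rewrite Vj1 in_setU (negbTE xVj) out_j.
by rewrite inE => /eqP.
Qed.

Lemma root_not_unique_rank : irreflexive e -> 1 < #|[set v | e a v]| ->
  V (size s) = setT -> ~ unique_rank e a s a.
Proof.
move=> e_irr deg_a Vfull uniq_a.
have nbr_neq x : e a x -> x != a by apply: contraTneq => ->; rewrite e_irr.
have [v av] : exists v, e a v.
  by have /card_gt0P[v] := ltnW deg_a; rewrite inE; exists v.
have lt_0s : 0 < size s.
  by apply: (tree_verts_lt_size (x := v) Vfull); rewrite tree_verts0 inE nbr_neq.
have aW2 : a \in W2 e (V 0).
  rewrite in_W2 tree_verts0 set11 (leq_trans deg_a) //.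
  by apply/subset_leq_card/subsetP => x; rewrite !inE => ax; rewrite ax nbr_neq.
have x0W2 : nth a s 0 \in W2 e (V 0) by apply: expanded_W2 => //; apply/set0Pn; exists a.
have x0a : nth a s 0 = a.
  by move: (expanded_in_tree lt_0s); rewrite tree_verts0 inE => /eqP.
by move: (W2_expansion_not_unique_rank lt_0s x0W2 uniq_a); rewrite x0a eqxx.
Qed.

End Execution.

Unset Implicit Arguments.
Theorem lemma4 (T : finType) (e : rel T) (a : T) (s : seq T)
  (e_sym : symmetric e) (e_irr : irreflexive e)
  (e_conn : forall x y : T, connect e x y)
  (deg_a : 1 < #|[set v | e a v]|)
  (exec : execution e a s)
  (u v : T) (huv : e u v) (hU : unique_rank e a s u) (hF : degF e a s v = 1) :
  rank e a s v < rank e a s u.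
Proof.
case: exec => valid Vfull; rewrite ltnNge; apply/negP => le_uv.
have vu : v != u by apply: contraTneq huv => ->; rewrite e_irr.
have lt_uv : rank e a s u < rank e a s v by rewrite ltn_neqAle le_uv eq_sym hU.
have ua : u != a.
  apply/eqP => ua; move: hU; rewrite ua.
  exact: root_not_unique_rank valid e_irr deg_a Vfull.
have [j lt_js out_u] := exists_join_step Vfull ua.
have [W2j out_j] := unique_rank_joined_alone valid lt_js out_u hU.
have jW2 : nth a s j \notin W2 e (tree_verts e a s j) by rewrite W2j inE.
have vVj1 : v \notin tree_verts e a s j.+1.
  rewrite tree_vertsS // in_setU out_j inE negb_or vu andbT.
  apply: contraTN lt_uv => /(rank_new_child_gt valid lt_js jW2 out_u).
  by rewrite -leqNgt => /ltnW.
have lt_j1s := tree_verts_lt_size Vfull vVj1.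
have x_u : nth a s j.+1 = u.
  apply: (expansion_after_join valid lt_j1s W2j out_j).
  by apply/set0Pn; exists v; rewrite in_Vout huv.
have out_v : v \in Vout e (tree_verts e a s j.+1) (nth a s j.+1).
  by rewrite x_u in_Vout huv.
have [xW2|xW2] := boolP (nth a s j.+1 \in W2 e (tree_verts e a s j.+1)).
  by move: (W2_expansion_not_unique_rank valid lt_j1s xW2 hU); rewrite x_u eqxx.
by move: (degF_new_child valid lt_j1s xW2 out_v); rewrite hF.
Qed.
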